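(* Let $A \in \mathbb{R}^{m \times r}$, $b \in \mathbb{R}^m$, $P = \{ x \in \mathbb{R}^r \mid Ax \ge b\}$, $C^r = \{ x \in \mathbb{R}^r \mid Ax \ge 0\}$, and \[ \tilde C = \{ (x, \xi, Ax - \xi b) \in \mathbb{R}^{r+1+m} \mid \xi \ge 0 \text{ and } Ax - \xi b \ge 0\}. \] Then: (1) for nonzero $x \in C^r$, $x$ is conformally non-decomposable in $C^r$ if and only if $(x, 0, Ax)$ is conformally non-decomposable in $\tilde C$; (2) for $x \in P$, $x$ is convex-conformally non-decomposable in $P$ if and only if $(x, 1, Ax - b)$ is conformally non-decomposable in $\tilde C$.
   Context: For $x \in \mathbb{R}^n$, $\operatorname{sign}(x) \in \{-,0,+\}^n$ is obtained by applying the sign function componentwise; the relations $0<-$, $0<+$ induce a componentwise partial order on $\{-,0,+\}^n$. For a convex cone $K$, a nonzero $x \in K$ is conformally non-decomposable in $K$ if for all nonzero $x^1,x^2 \in K$ with $\operatorname{sign}(x^1),\operatorname{sign}(x^2) \le \operatorname{sign}(x)$, $x = x^1 + x^2$ implies $x^1 = \lambda x^2$ for some $\lambda > 0$. A vector $x \in P$ is convex-conformally non-decomposable in $P$ if for all $x^1,x^2 \in P$ with $\operatorname{sign}(x^1),\operatorname{sign}(x^2) \le \operatorname{sign}(x)$ and all $0<\lambda<1$, $x = \lambda x^1 + (1-\lambda)x^2$ implies $x^1 = x^2$. *)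

From HB Require Import structures.
From mathcomp Require Import all_boot all_order all_algebra.
Set Implicit Arguments. Unset Strict Implicit. Unset Printing Implicit Defensive.
Import Order.TTheory GRing.Theory Num.Theory.
Local Open Scope ring_scope.

Section Defs.
Variable R : realFieldType.

(* componentwise sign order on {-,0,+}^n: 0 < -, 0 < +, - and + incomparable.
   sign(x) <= sign(y) iff each component sign of x is 0 or equals that of y. *)
Definition sign_le n (x y : 'cV[R]_n) : Prop :=
  forall i : 'I_n, Num.sg (x i 0) = 0 \/ Num.sg (x i 0) = Num.sg (y i 0).

Definition vnneg n (v : 'cV[R]_n) : Prop := forall i : 'I_n, 0 <= v i 0.

Definition conf_nondec n (K : 'cV[R]_n -> Prop) (x : 'cV[R]_n) : Prop :=
  K x /\ x <> 0 /\
  forall x1 x2 : 'cV[R]_n, K x1 -> K x2 -> x1 <> 0 -> x2 <> 0 ->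
    sign_le x1 x -> sign_le x2 x -> x = x1 + x2 ->
    exists lam : R, 0 < lam /\ x1 = lam *: x2.

Definition cconf_nondec n (P : 'cV[R]_n -> Prop) (x : 'cV[R]_n) : Prop :=
  P x /\
  forall (x1 x2 : 'cV[R]_n) (lam : R), P x1 -> P x2 ->
    sign_le x1 x -> sign_le x2 x -> 0 < lam -> lam < 1 ->
    x = lam *: x1 + (1 - lam) *: x2 -> x1 = x2.

Definition polyhedronP m r (A : 'M[R]_(m, r)) (b : 'cV[R]_m) (x : 'cV[R]_r) : Prop :=
  vnneg (A *m x - b).

Definition coneC m r (A : 'M[R]_(m, r)) (x : 'cV[R]_r) : Prop :=
  vnneg (A *m x).

Definition triple m r (x : 'cV[R]_r) (xi : R) (y : 'cV[R]_m) : 'cV[R]_(r + 1 + m) :=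
  col_mx (col_mx x (const_mx xi)) y.

Definition coneCt m r (A : 'M[R]_(m, r)) (b : 'cV[R]_m) (v : 'cV[R]_(r + 1 + m)) : Prop :=
  exists (x : 'cV[R]_r) (xi : R),
    v = triple x xi (A *m x - xi *: b) /\ 0 <= xi /\ vnneg (A *m x - xi *: b).

End Defs.

From HB Require Import structures.
From mathcomp Require Import all_boot all_order all_algebra.
From mathcomp Require Import lra.
Import Order.TTheory GRing.Theory Num.Theory.
Local Open Scope ring_scope.
Set Implicit Arguments. Unset Strict Implicit.

(* The cone [tilde C] is the homogenization of [P]: its elements with [xi > 0]
   are positive multiples of lifts [(z, 1, Az - b)] of points [z] of [P], and
   its elements with [xi = 0] are the lifts [(z, 0, Az)] of points of the
   recession cone [C^r].  Over [xi = 0] both summands must have [xi = 0], which is part (1).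
   Over [xi = 1], if both summands have [xi > 0] then rescaling them to level 1
   gives a convex-conformal decomposition in [P], which is part (2).  The
   remaining case, a summand at level 0, means [x = x1 + x2] with [x1] in the
   recession cone and [x2] in [P]; then [x] is also the midpoint of
   [x + x1] and [x - x1], both in [P] and conformal to [x], so convex-conformal
   non-decomposability forces [x1 = 0]. *)

Section SignOrder.
Variable R : realFieldType.

Lemma sgrD_sign_le (a c : R) :
  Num.sg c = 0 \/ Num.sg c = Num.sg a -> Num.sg (a + c) = Num.sg a.
Proof.
case=> [/eqP|]; first by rewrite sgr_eq0 => /eqP ->; rewrite addr0.
case: (ltrgt0P a) => [a_gt0|a_lt0|->].
- by rewrite (gtr0_sg a_gt0) => /eqP; rewrite sgr_cp0 => c_gt0; rewrite !gtr0_sg //; lra.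
- by rewrite (ltr0_sg a_lt0) => /eqP; rewrite sgr_cp0 => c_lt0; rewrite !ltr0_sg //; lra.
- by rewrite add0r.
Qed.

Lemma vnnegD n (u v : 'cV[R]_n) : vnneg u -> vnneg v -> vnneg (u + v).
Proof. by move=> hu hv i; rewrite mxE addr_ge0. Qed.

Lemma vnnegZ n (c : R) (v : 'cV[R]_n) : 0 <= c -> vnneg v -> vnneg (c *: v).
Proof. by move=> c_ge0 hv i; rewrite mxE mulr_ge0. Qed.

Lemma sign_le_nnegD n (u v : 'cV[R]_n) : vnneg u -> vnneg v -> sign_le u (u + v).
Proof.
move=> hu hv i; rewrite [(u + v) i 0]mxE.
have [->|u_neq0] := eqVneq (u i 0) 0; first by left; rewrite sgr0.
have u_gt0 : 0 < u i 0 by rewrite lt0r u_neq0 hu.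
by right; rewrite !gtr0_sg // ltr_wpDr.
Qed.

Lemma sign_leZ n (c : R) (u v : 'cV[R]_n) : 0 < c -> sign_le u v -> sign_le (c *: u) v.
Proof. by move=> c_gt0 huv i; rewrite mxE sgrM gtr0_sg // mul1r. Qed.

Lemma sign_le_col_mx n1 n2 (u1 v1 : 'cV[R]_n1) (u2 v2 : 'cV[R]_n2) :
  sign_le (col_mx u1 u2) (col_mx v1 v2) <-> sign_le u1 v1 /\ sign_le u2 v2.
Proof.
split=> [h|[h1 h2] i].
  by split=> i; [have := h (lshift _ i) | have := h (rshift _ i)];
    rewrite ?col_mxEu ?col_mxEd.
by rewrite -(splitK i); case: (split i) => j /=; rewrite ?col_mxEu ?col_mxEd.
Qed.

Lemma sign_le_const_mx (a c : R) :
  sign_le (const_mx a : 'cV[R]_1) (const_mx c) <-> Num.sg a = 0 \/ Num.sg a = Num.sg c.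
Proof. by split=> [/(_ ord0)|h i]; rewrite !mxE. Qed.

End SignOrder.

Section Homogenization.
Variables (R : realFieldType) (m r : nat).
Variables (A : 'M[R]_(m, r)) (b : 'cV[R]_m).
Implicit Types (x z : 'cV[R]_r) (xi : R).

Lemma triple_inj x xi (y : 'cV[R]_m) x' xi' y' :
  triple x xi y = triple x' xi' y' -> [/\ x = x', xi = xi' & y = y'].
Proof.
rewrite /triple => /eq_col_mx [/eq_col_mx [-> e] ->]; split => //.
by have := congr1 (fun M : 'cV[R]_1 => M 0 0) e; rewrite !mxE.
Qed.

Definition homog z xi : 'cV[R]_(r + 1 + m) := triple z xi (A *m z - xi *: b).

Lemma homog_inj z xi z' xi' : homog z xi = homog z' xi' -> z = z' /\ xi = xi'.
Proof. by case/triple_inj. Qed.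

Lemma homogD z1 xi1 z2 xi2 :
  homog z1 xi1 + homog z2 xi2 = homog (z1 + z2) (xi1 + xi2).
Proof.
rewrite /homog /triple !add_col_mx mulmxDr scalerDl addrACA opprD.
by congr (col_mx (col_mx _ _) _); apply/matrixP => i j; rewrite !mxE.
Qed.

Lemma homogZ c z xi : c *: homog z xi = homog (c *: z) (c * xi).
Proof.
rewrite /homog /triple !scale_col_mx scalerBr scalemxAr scalerA.
by congr (col_mx (col_mx _ _) _); apply/matrixP => i j; rewrite !mxE.
Qed.

Lemma homog_eq0 z xi : homog z xi = 0 <-> z = 0 /\ xi = 0.
Proof.
have homog00 : homog 0 0 = 0 by have := homogZ 0 0 0; rewrite !scale0r mul0r.
by split=> [|[-> ->] //]; rewrite -{1}homog00 => /homog_inj [].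
Qed.

Lemma sign_le_homog z xi z' xi' :
  sign_le (homog z xi) (homog z' xi') <->
  [/\ sign_le z z', Num.sg xi = 0 \/ Num.sg xi = Num.sg xi'
    & sign_le (A *m z - xi *: b) (A *m z' - xi' *: b)].
Proof.
rewrite /homog /triple !sign_le_col_mx sign_le_const_mx.
by split=> [[[]]|[]].
Qed.

Lemma coneCt_homog0 z : coneC A z -> coneCt A b (homog z 0).
Proof. by move=> hz; exists z, 0; do 2!split=> //; rewrite scale0r subr0. Qed.

Lemma coneCt_homog_polyhedron c z :
  0 <= c -> polyhedronP A b z -> coneCt A b (homog (c *: z) c).
Proof.
move=> c_ge0 hz; exists (c *: z), c; split=> //; split=> //.
by rewrite -scalemxAr -scalerBr; apply: vnnegZ.
Qed.

Lemma polyhedronP_scale_homog z xi :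
  0 < xi -> vnneg (A *m z - xi *: b) -> polyhedronP A b (xi^-1 *: z).
Proof.
move=> xi_gt0 hz; rewrite /polyhedronP.
have -> : A *m (xi^-1 *: z) - b = xi^-1 *: (A *m z - xi *: b).
  by rewrite scalerBr scalerA mulVf ?gt_eqF // scale1r scalemxAr.
by apply: vnnegZ; rewrite // invr_ge0 ltW.
Qed.

Lemma cconf_nondec_recession0 x x1 x2 :
  cconf_nondec (polyhedronP A b) x -> x = x1 + x2 ->
  coneC A x1 -> polyhedronP A b x2 -> sign_le x1 x -> sign_le x2 x -> x1 = 0.
Proof.
case=> hx H ex h1 h2 s1 s2.
have e2 : x2 = x - x1 by rewrite ex addrC addKr.
suff e : x + x1 = x - x1.
  by apply/matrixP => i j; have := congr1 (fun M : 'cV[R]_r => M i j) e; rewrite !mxE; lra.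
apply: (H _ _ 2^-1); rewrite ?e2 in h2 s2 *; try exact: h2; try exact: s2.
- by rewrite /polyhedronP mulmxDr addrAC; apply: vnnegD.
- by move=> i; right; rewrite mxE; apply: sgrD_sign_le.
- lra.
- lra.
- by apply/matrixP => i j; rewrite !mxE; lra.
Qed.

Lemma conf_nondec_homog0 x :
  conf_nondec (coneC A) x -> conf_nondec (coneCt A b) (homog x 0).
Proof.
case=> hx [x_neq0 H]; split; first exact: coneCt_homog0.
split; first by case/homog_eq0.
move=> _ _ [x1 [xi1 [-> [xi1_ge0 h1]]]] [x2 [xi2 [-> [xi2_ge0 h2]]]] n1 n2
  /sign_le_homog [s1 _ _] /sign_le_homog [s2 _ _].
rewrite homogD => /homog_inj [ex exi].
have xi1_0 : xi1 = 0 by lra.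
have xi2_0 : xi2 = 0 by lra.
subst xi1 xi2; rewrite scale0r subr0 in h1; rewrite scale0r subr0 in h2.
have [lam [lam_gt0 e]] : exists lam, 0 < lam /\ x1 = lam *: x2.
  by apply: H => // [e|e]; [apply: n1 | apply: n2]; rewrite e; apply/homog_eq0.
by exists lam; rewrite homogZ mulr0 e.
Qed.

Lemma conf_nondec_of_homog0 x : coneC A x -> x <> 0 ->
  conf_nondec (coneCt A b) (homog x 0) -> conf_nondec (coneC A) x.
Proof.
move=> hx x_neq0 [_ [_ H]]; split=> //; split=> // x1 x2 h1 h2 n1 n2 s1 s2 ex.
have homog0_le z : coneC A z -> coneC A (x - z) -> sign_le z x ->
    sign_le (homog z 0) (homog x 0).
  move=> hz hxz szx; apply/sign_le_homog; split=> //; first by right.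
  by rewrite !scale0r !subr0 -[x](subrKC z) mulmxDr; apply: sign_le_nnegD.
have ex2 : x2 = x - x1 by rewrite ex addrC addKr.
have ex1 : x1 = x - x2 by rewrite ex addrK.
have [|||||||lam [lam_gt0]] := H (homog x1 0) (homog x2 0).
- exact: coneCt_homog0.
- exact: coneCt_homog0.
- by case/homog_eq0.
- by case/homog_eq0.
- by apply: homog0_le; rewrite -?ex2.
- by apply: homog0_le; rewrite -?ex1.
- by rewrite homogD ex addr0.
by rewrite homogZ => /homog_inj [e _]; exists lam.
Qed.

Lemma homog_level_gt0 x x1 x2 xi1 xi2 :
  cconf_nondec (polyhedronP A b) x -> x = x1 + x2 -> xi1 + xi2 = 1 ->
  0 <= xi1 -> vnneg (A *m x1 - xi1 *: b) -> vnneg (A *m x2 - xi2 *: b) ->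
  sign_le x1 x -> sign_le x2 x -> homog x1 xi1 <> 0 -> 0 < xi1.
Proof.
move=> hx ex exi xi1_ge0 h1 h2 s1 s2 n1; rewrite lt_def xi1_ge0 andbT.
apply/eqP=> xi1_0; subst xi1; rewrite add0r in exi; subst xi2.
rewrite scale0r subr0 in h1; rewrite scale1r in h2.
by apply: n1; apply/homog_eq0; rewrite (cconf_nondec_recession0 hx ex).
Qed.

Lemma conf_nondec_homog1 x :
  cconf_nondec (polyhedronP A b) x -> conf_nondec (coneCt A b) (homog x 1).
Proof.
move=> hx; have [xP H] := hx; split.
  by exists x, 1; do 2!split=> //; rewrite scale1r.
split; first by case/homog_eq0=> _ /eqP; rewrite oner_eq0.
move=> _ _ [x1 [xi1 [-> [xi1_ge0 h1]]]] [x2 [xi2 [-> [xi2_ge0 h2]]]] n1 n2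
  /sign_le_homog [s1 _ _] /sign_le_homog [s2 _ _].
rewrite homogD => /homog_inj [ex /esym exi].
have xi1_gt0 := homog_level_gt0 hx ex exi xi1_ge0 h1 h2 s1 s2 n1.
have xi2_gt0 : 0 < xi2.
  by apply: (homog_level_gt0 hx _ _ xi2_ge0 h2 h1 s2 s1 n2); rewrite addrC.
have e : xi1^-1 *: x1 = xi2^-1 *: x2.
  have xi2E : 1 - xi1 = xi2 by lra.
  apply: (H _ _ xi1) => //.
  - exact: polyhedronP_scale_homog.
  - exact: polyhedronP_scale_homog.
  - by apply: sign_leZ; rewrite ?invr_gt0.
  - by apply: sign_leZ; rewrite ?invr_gt0.
  - lra.
  - by rewrite xi2E !scalerA !mulfV ?gt_eqF // !scale1r.
have ex1 : x1 = (xi1 / xi2) *: x2.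
  by rewrite -scalerA -e scalerA mulfV ?gt_eqF // scale1r.
by exists (xi1 / xi2); rewrite divr_gt0 // homogZ -ex1 divfK ?gt_eqF.
Qed.

Lemma cconf_nondec_of_homog1 x : polyhedronP A b x ->
  conf_nondec (coneCt A b) (homog x 1) -> cconf_nondec (polyhedronP A b) x.
Proof.
move=> hx [_ [_ H]]; split=> // x1 x2 lam h1 h2 s1 s2 lam_gt0 lam_lt1 ex.
have lam'_gt0 : 0 < 1 - lam by lra.
have ey : A *m x - b = lam *: (A *m x1 - b) + (1 - lam) *: (A *m x2 - b).
  rewrite ex mulmxDr -!scalemxAr !scalerBr -addrACA -opprD -scalerDl.
  by rewrite subrKC scale1r.
have homog_le c z : 0 < c -> sign_le z x -> vnneg (A *m x - b - c *: (A *m z - b)) ->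
    polyhedronP A b z -> sign_le (homog (c *: z) c) (homog x 1).
  move=> c_gt0 szx hrest hz; apply/sign_le_homog; split; first exact: sign_leZ.
    by right; rewrite !gtr0_sg.
  rewrite -scalemxAr -scalerBr scale1r -[A *m x - b](subrKC (c *: (A *m z - b))).
  by apply: sign_le_nnegD => //; apply: vnnegZ; rewrite // ltW.
have [|||||||mu [mu_gt0]] := H (homog (lam *: x1) lam) (homog ((1 - lam) *: x2) (1 - lam)).
- by apply: coneCt_homog_polyhedron; rewrite // ltW.
- by apply: coneCt_homog_polyhedron; rewrite // ltW.
- by case/homog_eq0=> _ e; lra.
- by case/homog_eq0=> _ e; lra.
- by apply: homog_le; rewrite // ey addrAC subrr add0r; apply: vnnegZ; rewrite // ltW.
- by apply: homog_le; rewrite // ey addrK; apply: vnnegZ; rewrite // ltW.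
- by rewrite homogD -ex subrKC.
rewrite homogZ => /homog_inj [e1 e2].
rewrite scalerA -e2 in e1.
have := congr1 (fun v => lam^-1 *: v) e1.
by rewrite !scalerA mulVf ?gt_eqF // !scale1r.
Qed.

End Homogenization.

Theorem lemma3 (R : realFieldType) (m r : nat) (A : 'M[R]_(m, r)) (b : 'cV[R]_m) :
  (forall x : 'cV[R]_r, coneC A x -> x <> 0 ->
     (conf_nondec (coneC A) x <->
      conf_nondec (coneCt A b) (triple x 0 (A *m x))))
  /\
  (forall x : 'cV[R]_r, polyhedronP A b x ->
     (cconf_nondec (polyhedronP A b) x <->
      conf_nondec (coneCt A b) (triple x 1 (A *m x - b)))).
Proof.
split=> x hx.
- have -> : triple x 0 (A *m x) = homog A b x 0 by rewrite /homog scale0r subr0.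
  move=> x_neq0; split; first exact: conf_nondec_homog0.
  exact: conf_nondec_of_homog0.
- have -> : triple x 1 (A *m x - b) = homog A b x 1 by rewrite /homog scale1r.
  split; first exact: conf_nondec_homog1.
  exact: cconf_nondec_of_homog1.
Qed.
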